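(* Let $A_i\in\mathbb{R}^{n\times n}$ ($i=1,\dots,q_A$), $B_j\in\mathbb{R}^{n\times n_f}$ ($j=1,\dots,q_B$), $C_k\in\mathbb{R}^{n_o\times n}$ ($k=1,\dots,q_C$), and $\hat A_i\in\mathbb{R}^{r\times r}$, $\hat B_j\in\mathbb{R}^{r\times n_f}$, $\hat C_k\in\mathbb{R}^{n_o\times r}$. Set \[ \mathbf{C}=\begin{bmatrix}C_1^{\mathrm T}&\cdots&C_{q_C}^{\mathrm T}\end{bmatrix}^{\mathrm T},\quad \hat{\mathbf{C}}=\begin{bmatrix}\hat C_1^{\mathrm T}&\cdots&\hat C_{q_C}^{\mathrm T}\end{bmatrix}^{\mathrm T},\quad \mathbf{B}=\begin{bmatrix}B_1&\cdots&B_{q_B}\end{bmatrix},\quad \hat{\mathbf{B}}=\begin{bmatrix}\hat B_1&\cdots&\hat B_{q_B}\end{bmatrix}. \] Assume $\mathbf{B}$ has full column rank and $\mathbf{C}$ has full row rank, with singular value decompositions \[ \mathbf{C}=U_{\mathbf{C}}\begin{bmatrix}\Sigma_{\mathbf{C}}&0\end{bmatrix}\begin{bmatrix}V_{\mathbf{C},1}&V_{\mathbf{C},2}\end{bmatrix}^{\mathrm T},\qquad \mathbf{B}=\begin{bmatrix}U_{\mathbf{B},1}&U_{\mathbf{B},2}\end{bmatrix}\begin{bmatrix}\Sigma_{\mathbf{B}}\\0\end{bmatrix}V_{\mathbf{B}}^{\mathrm T}, \] where $V_{\mathbf{C},2}\in\mathbb{R}^{n\times(n-q_Cn_o)}$ and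 $U_{\mathbf{B},2}\in\mathbb{R}^{n\times(n-q_Bn_f)}$. Let $V_1=V_{\mathbf{C},1}\Sigma_{\mathbf{C}}^{-1}U_{\mathbf{C}}^{\mathrm T}\hat{\mathbf{C}}$ and $W_1=U_{\mathbf{B},1}\Sigma_{\mathbf{B}}^{-1}V_{\mathbf{B}}^{\mathrm T}\hat{\mathbf{B}}^{\mathrm T}$. If there exists $Y\in\mathbb{R}^{(n-q_Bn_f)\times r}$ such that the matrix \[ \begin{bmatrix}(W_1+U_{\mathbf{B},2}Y)^{\mathrm T}A_1V_{\mathbf{C},2}\\ \vdots\\ (W_1+U_{\mathbf{B},2}Y)^{\mathrm T}A_{q_A}V_{\mathbf{C},2}\end{bmatrix}\in\mathbb{R}^{q_Ar\times(n-q_Cn_o)} \] has full row rank, then there exist $V,W\in\mathbb{R}^{n\times r}$ such that $\hat A_i=W^{\mathrm T}A_iV$ for $i=1,\dots,q_A$, $\hat B_j=W^{\mathrm T}B_j$ for $j=1,\dots,q_B$, and $\hat C_k=C_kV$ for $k=1,\dots,q_C$.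
   Context: In the singular value decompositions, $U_{\mathbf{C}}$, $[V_{\mathbf{C},1}\ V_{\mathbf{C},2}]$, $[U_{\mathbf{B},1}\ U_{\mathbf{B},2}]$, $V_{\mathbf{B}}$ are orthogonal matrices and $\Sigma_{\mathbf{C}}\in\mathbb{R}^{q_Cn_o\times q_Cn_o}$, $\Sigma_{\mathbf{B}}\in\mathbb{R}^{q_Bn_f\times q_Bn_f}$ are diagonal with positive diagonal entries. *)

From HB Require Import structures.
From mathcomp Require Import all_boot all_order all_algebra.
Set Implicit Arguments. Unset Strict Implicit. Unset Printing Implicit Defensive.
Import Order.TTheory GRing.Theory Num.Theory.
Local Open Scope ring_scope.

(* Block indexing: row i of a (q*m)-stack lies in block i %/ m at offset i %% m. *)
Lemma blk_proof (q m : nat) (i : 'I_(q * m)) : (i %/ m < q)%N.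
Proof.
case: m i => [|m] i; first by rewrite muln0 in i *; case: i.
by rewrite ltn_divLR // ltn_ord.
Qed.

Lemma off_proof (q m : nat) (i : 'I_(q * m)) : (i %% m < m)%N.
Proof.
case: m i => [|m] i; first by rewrite muln0 in i *; case: i.
by rewrite ltn_mod.
Qed.

Definition blk_idx (q m : nat) (i : 'I_(q * m)) : 'I_q := Ordinal (blk_proof i).
Definition off_idx (q m : nat) (i : 'I_(q * m)) : 'I_m := Ordinal (off_proof i).

Definition vstack (R : Type) (q m p : nat) (F : 'I_q -> 'M[R]_(m, p)) : 'M[R]_(q * m, p) :=
  \matrix_(i < q * m, j < p) F (blk_idx i) (off_idx i) j.

Definition hstack (R : Type) (q m p : nat) (F : 'I_q -> 'M[R]_(m, p)) : 'M[R]_(m, q * p) :=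
  \matrix_(i < m, j < q * p) F (blk_idx j) i (off_idx j).

(* orthogonal matrix (possibly with a non-syntactically-square type) *)
Definition orthogonal_mx (R : pzRingType) (m p : nat) (U : 'M[R]_(m, p)) : Prop :=
  U *m U^T = 1%:M /\ U^T *m U = 1%:M.

Definition posdiag (R : numDomainType) (m : nat) (S : 'M[R]_m) : Prop :=
  is_diag_mx S /\ forall i, 0 < S i i.

From HB Require Import structures.
From mathcomp Require Import all_boot all_order all_algebra.
Import Order.TTheory GRing.Theory Num.Theory.
Local Open Scope ring_scope.
Set Implicit Arguments. Unset Strict Implicit. Unset Printing Implicit Defensive.

(* Orthogonality of the SVD factors makes V_C1 Σ_C^-1 U_C^T a right inverse of C
   and gives C V_C2 = 0; the same facts for the SVD of B^T give W1^T B = B̂ and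
   U_B2^T B = 0.  Hence V = V1 + V_C2 Z satisfies C V = Ĉ for every Z, and
   W = W1 + U_B2 Y satisfies W^T B = B̂.  The remaining conditions W^T A_i V = Â_i
   form the linear system [W^T A_i V_C2]_i Z = [Â_i - W^T A_i V1]_i, solvable
   because its coefficient matrix has full row rank. *)

Lemma blk_off_surj (q m : nat) (j : 'I_q) (c : 'I_m) :
  exists k : 'I_(q * m), blk_idx k = j /\ off_idx k = c.
Proof.
have m_gt0 : (0 < m)%N by apply: leq_ltn_trans (ltn_ord c).
have k_lt : (j * m + c < q * m)%N.
  apply: (@leq_trans (j.+1 * m)); first by rewrite mulSnr ltn_add2l.
  by rewrite leq_mul2r ltn_ord orbT.
exists (Ordinal k_lt); split; apply/val_inj => /=.
  by rewrite divnMDl // divn_small // addn0.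
by rewrite modnMDl modn_small.
Qed.

Section Stacks.
Variables (R : pzRingType) (q m p : nat).

Lemma eq_hstack (F G : 'I_q -> 'M[R]_(m, p)) :
  hstack F = hstack G -> forall j, F j = G j.
Proof.
move=> /matrixP eqFG j; apply/matrixP => i c.
have [k [<- <-]] := blk_off_surj j c.
by have := eqFG i k; rewrite !mxE.
Qed.

Lemma eq_vstack (F G : 'I_q -> 'M[R]_(m, p)) :
  vstack F = vstack G -> forall j, F j = G j.
Proof.
move=> /matrixP eqFG j; apply/matrixP => c i.
have [k [<- <-]] := blk_off_surj j c.
by have := eqFG k i; rewrite !mxE.
Qed.

Lemma mul_mx_hstack l (M : 'M[R]_(l, m)) (F : 'I_q -> 'M[R]_(m, p)) :
  M *m hstack F = hstack (fun j => M *m F j).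
Proof. by apply/matrixP => i k; rewrite !mxE; apply: eq_bigr => x _; rewrite !mxE. Qed.

Lemma mul_vstack_mx l (F : 'I_q -> 'M[R]_(m, p)) (M : 'M[R]_(p, l)) :
  vstack F *m M = vstack (fun j => F j *m M).
Proof. by apply/matrixP => i k; rewrite !mxE; apply: eq_bigr => x _; rewrite !mxE. Qed.

End Stacks.

Lemma tr_is_diag_mx (R : pzRingType) m (S : 'M[R]_m) : is_diag_mx S -> S^T = S.
Proof. by case/diag_mxP => d ->; rewrite tr_diag_mx. Qed.

Lemma posdiag_unitmx (R : realFieldType) m (S : 'M[R]_m) : posdiag S -> S \in unitmx.
Proof.
case=> /diag_mxP [d defS] S_gt0; rewrite unitmxE unitfE defS det_diag.
rewrite prodf_seq_neq0; apply/allP => i _ /=.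
by have := S_gt0 i; rewrite defS mxE eqxx mulr1n => /gt_eqF ->.
Qed.

Lemma orthogonal_row_mx (R : pzRingType) n a b (X : 'M[R]_(n, a)) (Y : 'M[R]_(n, b)) :
  orthogonal_mx (row_mx X Y) ->
  [/\ X^T *m X = 1%:M, X^T *m Y = 0, Y^T *m X = 0 & Y^T *m Y = 1%:M].
Proof.
case=> _; rewrite tr_row_mx mul_col_row (scalar_mx_block a b).
by case/eq_block_mx.
Qed.

Section SVDInverse.
Variables (R : comUnitRingType) (m k n : nat).
Variables (X : 'M[R]_(m, n)) (U S : 'M[R]_m) (V1 : 'M[R]_(n, m)) (V2 : 'M[R]_(n, k)).
Hypothesis orthoV : orthogonal_mx (row_mx V1 V2).
Hypothesis defX : X = U *m row_mx S 0 *m (row_mx V1 V2)^T.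

Lemma svd_thin : X = U *m S *m V1^T.
Proof. by rewrite defX tr_row_mx -mulmxA mul_row_col mul0mx addr0 mulmxA. Qed.

Lemma svd_mul_ker : X *m V2 = 0.
Proof.
have [_ V12 _ _] := orthogonal_row_mx orthoV.
by rewrite svd_thin -mulmxA V12 mulmx0.
Qed.

Lemma svd_mul_pinv : U *m U^T = 1%:M -> S \in unitmx ->
  X *m (V1 *m invmx S *m U^T) = 1%:M.
Proof.
move=> orthoU unitS; have [V11 _ _ _] := orthogonal_row_mx orthoV.
rewrite svd_thin !mulmxA -(mulmxA _ V1^T) V11 mulmx1.
by rewrite -(mulmxA U) mulmxV // mulmx1.
Qed.

End SVDInverse.

Lemma row_free_solvable (F : fieldType) p k l (M : 'M[F]_(p, k)) (D : 'M[F]_(p, l)) :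
  \rank M = p -> exists Z, M *m Z = D.
Proof.
move=> rankM; have /row_freeP [P MP] : row_free M by rewrite /row_free rankM.
by exists (P *m D); rewrite mulmxA MP mul1mx.
Qed.

Theorem theorem2 (R : realFieldType) (n nf no r qA qB qC : nat)
  (A : 'I_qA -> 'M[R]_n) (B : 'I_qB -> 'M[R]_(n, nf)) (C : 'I_qC -> 'M[R]_(no, n))
  (Ah : 'I_qA -> 'M[R]_r) (Bh : 'I_qB -> 'M[R]_(r, nf)) (Ch : 'I_qC -> 'M[R]_(no, r))
  (UC : 'M[R]_(qC * no)) (SC : 'M[R]_(qC * no))
  (VC1 : 'M[R]_(n, qC * no)) (VC2 : 'M[R]_(n, n - qC * no))
  (UB1 : 'M[R]_(n, qB * nf)) (UB2 : 'M[R]_(n, n - qB * nf))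
  (SB : 'M[R]_(qB * nf)) (VB : 'M[R]_(qB * nf)) :
  \rank (hstack B) = (qB * nf)%N ->
  \rank (vstack C) = (qC * no)%N ->
  orthogonal_mx UC -> orthogonal_mx (row_mx VC1 VC2) -> posdiag SC ->
  vstack C = UC *m row_mx SC 0 *m (row_mx VC1 VC2)^T ->
  orthogonal_mx (row_mx UB1 UB2) -> orthogonal_mx VB -> posdiag SB ->
  hstack B = row_mx UB1 UB2 *m col_mx SB 0 *m VB^T ->
  let V1 := VC1 *m invmx SC *m UC^T *m vstack Ch in
  let W1 := UB1 *m invmx SB *m VB^T *m (hstack Bh)^T in
  (exists Y : 'M[R]_(n - qB * nf, r),
      \rank (vstack (fun i => (W1 + UB2 *m Y)^T *m A i *m VC2)) = (qA * r)%N) ->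
  exists V W : 'M[R]_(n, r),
    [/\ forall i, Ah i = W^T *m A i *m V,
        forall j, Bh j = W^T *m B j
      & forall k, Ch k = C k *m V].
Proof.
(* The rank hypotheses on B and C are implied by their SVDs. *)
move=> _ _ [orthoUC _] orthoVC /posdiag_unitmx unitSC defC
  orthoUB [orthoVB _] posSB defB V1 W1 [Y rankM].
have unitSB := posdiag_unitmx posSB.
have defBt : (hstack B)^T = VB *m row_mx SB 0 *m (row_mx UB1 UB2)^T.
  by rewrite defB !trmx_mul trmxK tr_col_mx (tr_is_diag_mx posSB.1) trmx0 mulmxA.
set W := W1 + UB2 *m Y.
have [Z solZ] := row_free_solvable (vstack (fun i => Ah i - W^T *m A i *m V1)) rankM.
exists (V1 + VC2 *m Z), W; split.
- move=> i; move: solZ; rewrite mul_vstack_mx => /eq_vstack /(_ i) solZi.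
  by rewrite mulmxDr [X in _ + X]mulmxA solZi addrC subrK.
- apply: eq_hstack; rewrite -mul_mx_hstack -[hstack B]trmxK -trmx_mul.
  rewrite /W mulmxDr [X in _ + X]mulmxA (svd_mul_ker orthoUB defBt) mul0mx addr0.
  by rewrite /W1 mulmxA (svd_mul_pinv orthoUB defBt) // mul1mx trmxK.
- apply: eq_vstack; rewrite -mul_vstack_mx mulmxDr [X in _ + X]mulmxA (svd_mul_ker orthoVC defC).
  by rewrite mul0mx addr0 /V1 mulmxA (svd_mul_pinv orthoVC defC) // mul1mx.
Qed.
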